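(* If a finite-dimensional algebra $\Lambda$ is hom-irreducible, then $\Lambda$ is ext-irreducible.
   Context: $\Bbbk$ is algebraically closed. Let $\Lambda=\Bbbk Q/I$ be the path algebra of a bound quiver (for an arbitrary finite-dimensional algebra the notions are taken for a Morita-equivalent bound quiver algebra). $\mathrm{rep}_\Lambda(\mathbf d)$ is the variety of representations $V=(V_\alpha)_{\alpha\in Q_1}$, $V_\alpha\in M_{d_{t\alpha}\times d_{s\alpha}}(\Bbbk)$, satisfying the relations in $I$. Hom-irreducibility: $\mathcal H_\Lambda(\mathbf e,\mathbf d)$ is the variety of triples $(V,W,f)$ with $V\in\mathrm{rep}_\Lambda(\mathbf e)$, $W\in\mathrm{rep}_\Lambda(\mathbf d)$ and $f=(f_x)$, $f_x\in M_{d_x\times e_x}(\Bbbk)$, with $W_\alpha f_{s\alpha}=f_{t\alpha}V_\alpha$ for all $\alpha$; $\Lambda$ is hom-irreducible if all $\mathcal H_\Lambda(\mathbf e,\mathbf d)$ are irreducible. Ext-irreducibility: for $V\in\mathrm{rep}_\Lambda(\mathbf d)$, $U\in\mathrm{rep}_\Lambda(\mathbf e)$, $Z=(Z_\alpha)$ with $Z_\alpha\in M_{d_{t\alpha}\times e_{s\alpha}}(\Bbbk)$, let $W^{V,Z,U}_\alpha=\begin{pmatrix}V_\alpha&Z_\alpha\\0&U_\alpha\end{pmatrix}$ and $\mathbb Z^{U,V}$ the set of $Z$ for which $W^{V,Z,U}$ satisfies the relations of $I$. $\mathcal E_\Lambda(\mathbf e,\mathbf d)$ is the variety of triples $(U,V,Z)$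 with $U\in\mathrm{rep}_\Lambda(\mathbf e)$, $V\in\mathrm{rep}_\Lambda(\mathbf d)$, $Z\in\mathbb Z^{U,V}$; $\Lambda$ is ext-irreducible if all $\mathcal E_\Lambda(\mathbf e,\mathbf d)$ are irreducible. *)

From HB Require Import structures.
From mathcomp Require Import all_boot all_order all_algebra.
Set Implicit Arguments. Unset Strict Implicit. Unset Printing Implicit Defensive.
Import GRing.Theory.
Local Open Scope ring_scope.

Inductive polyfun (K : nzRingType) (J : Type) : ((J -> K) -> K) -> Prop :=
| pf_const (c : K) : polyfun (fun _ => c)
| pf_var (j : J) : polyfun (fun z => z j)
| pf_add f g : polyfun f -> polyfun g -> polyfun (fun z => f z + g z)
| pf_mul f g : polyfun f -> polyfun g -> polyfun (fun z => f z * g z).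

Definition zclosed (K : nzRingType) (J : Type) (C : (J -> K) -> Prop) : Prop :=
  exists S : ((J -> K) -> K) -> Prop,
    (forall f, S f -> polyfun f) /\
    (forall z, C z <-> (forall f, S f -> f z = 0)).

Definition zirreducible (K : nzRingType) (J : Type) (X : (J -> K) -> Prop) : Prop :=
  (exists z, X z) /\
  forall C1 C2 : (J -> K) -> Prop, zclosed C1 -> zclosed C2 ->
    (forall z, X z -> C1 z \/ C2 z) ->
    (forall z, X z -> C1 z) \/ (forall z, X z -> C2 z).

(* coordinates of a product of matrix spaces prod_i M_(r i x c i) *)
Definition coords (I : Type) (r c : I -> nat) : Type :=
  {i : I & ('I_(r i) * 'I_(c i))%type}.

Definition mxat (K : nzRingType) (I : Type) (r c : I -> nat)
  (z : coords r c -> K) (i : I) : 'M[K]_(r i, c i) :=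
  \matrix_(a, b) z (existT _ i (a, b)).

Record quiver := Quiver {
  nv : nat;
  na : nat;
  qs : 'I_na -> 'I_nv;
  qt : 'I_na -> 'I_nv }.

Definition vert (Q : quiver) := 'I_(nv Q).
Definition arrow (Q : quiver) := 'I_(na Q).

(* a path (x, [:: a1; ...; ak]) starts at x and traverses a1 first, then a2,
   ...; the trivial path e_x is (x, [::]). *)
Definition qpath (Q : quiver) := ('I_(nv Q) * seq 'I_(na Q))%type.

Fixpoint validfrom (Q : quiver) (x : 'I_(nv Q)) (s : seq 'I_(na Q)) : bool :=
  match s with
  | [::] => true
  | a :: s' => (qs a == x) && validfrom (qt a) s'
  end.

Definition pvalid (Q : quiver) (p : qpath Q) : bool := validfrom p.1 p.2.
Definition ptgt (Q : quiver) (p : qpath Q) : 'I_(nv Q) := last p.1 (map (@qt Q) p.2).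

(* elements of kQ: coefficient functions on paths with finite support
   contained in the valid paths *)
Definition kQelt (K : nzRingType) (Q : quiver) (f : qpath Q -> K) : Prop :=
  (exists s : seq (qpath Q), forall p, f p != 0 -> p \in s) /\
  (forall p, f p != 0 -> pvalid p).

(* product u * f in which the path u is traversed first (f . u in the
   composition order), for a valid path u *)
Definition premul (K : nzRingType) (Q : quiver) (u : qpath Q) (f : qpath Q -> K)
  : qpath Q -> K :=
  fun p => if (p.1 == u.1) && (take (size u.2) p.2 == u.2)
           then f (ptgt u, drop (size u.2) p.2) else 0.

(* product in which the path u is traversed last (u . f) *)
Definition postmul (K : nzRingType) (Q : quiver) (u : qpath Q) (f : qpath Q -> K)
  : qpath Q -> K :=
  fun p => let q := (p.1, take (size p.2 - size u.2) p.2) in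
           if (size u.2 <= size p.2)%N && (drop (size p.2 - size u.2) p.2 == u.2)
              && (ptgt q == u.1)
           then f q else 0.

(* two-sided ideals of kQ: subspaces closed under multiplication by paths
   on both sides (paths span kQ) *)
Record kQideal (K : nzRingType) (Q : quiver) (I : (qpath Q -> K) -> Prop) : Prop := {
  ideal_elt : forall f, I f -> kQelt f;
  ideal_0 : I (fun _ => 0);
  ideal_add : forall f g, I f -> I g -> I (fun p => f p + g p);
  ideal_scale : forall (c : K) f, I f -> I (fun p => c * f p);
  ideal_pre : forall u f, pvalid u -> I f -> I (premul u f);
  ideal_post : forall u f, pvalid u -> I f -> I (postmul u f) }.

(* admissible ideal:  R_Q^m <= I <= R_Q^2 for some m >= 2 *)
Definition admissible (K : nzRingType) (Q : quiver) (I : (qpath Q -> K) -> Prop) : Prop :=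
  (forall f p, I f -> f p != 0 -> (2 <= size p.2)%N) /\
  (exists m, (2 <= m)%N /\
     forall p : qpath Q, pvalid p -> size p.2 = m ->
       I (fun q => (q == p)%:R)).

Definition repmx (K : nzRingType) (Q : quiver) (d : 'I_(nv Q) -> nat) : Type :=
  forall a : 'I_(na Q), 'M[K]_(d (qt a), d (qs a)).

(* pathmx V x s y : the matrix of the path (x, s) (if valid and ending at y),
   i.e. V_ak * ... * V_a1; it is 0 if (x, s) is not a valid path from x to y.
   (pid_mx is the identity when the two dimensions agree.) *)
Fixpoint pathmx (K : nzRingType) (Q : quiver) (d : 'I_(nv Q) -> nat) (V : repmx K d)
  (x : 'I_(nv Q)) (s : seq 'I_(na Q)) (y : 'I_(nv Q)) {struct s} : 'M[K]_(d y, d x) :=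
  match s with
  | [::] => if x == y then pid_mx (d x) else 0
  | a :: s' => pathmx V (qt a) s' y *m (if qs a == x then V a *m pid_mx (d (qs a)) else 0)
  end.

(* the (y,x)-block  e_y f(V) e_x  of the evaluation of f at V, computed over a
   list s containing the support of f *)
Definition evalblk (K : nzRingType) (Q : quiver) (d : 'I_(nv Q) -> nat) (V : repmx K d)
  (f : qpath Q -> K) (s : seq (qpath Q)) (x y : 'I_(nv Q)) : 'M[K]_(d y, d x) :=
  \sum_(p <- s | (p.1 == x) && (ptgt p == y)) f p *: pathmx V x p.2 y.

Definition satisfies (K : nzRingType) (Q : quiver) (d : 'I_(nv Q) -> nat) (V : repmx K d)
  (f : qpath Q -> K) : Prop :=
  forall s : seq (qpath Q), uniq s -> (forall p, f p != 0 -> p \in s) ->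
    forall x y, evalblk V f s x y = 0.

Definition isrep (K : nzRingType) (Q : quiver) (I : (qpath Q -> K) -> Prop)
  (d : 'I_(nv Q) -> nat) (V : repmx K d) : Prop :=
  forall f, I f -> satisfies V f.

(* coordinate blocks: V_a (e), W_a (d), f_x *)
Definition Hidx (Q : quiver) := ('I_(na Q) + 'I_(na Q) + 'I_(nv Q))%type.
Definition Hrow (Q : quiver) (e d : 'I_(nv Q) -> nat) (i : Hidx Q) : nat :=
  match i with
  | inl (inl a) => e (qt a)
  | inl (inr a) => d (qt a)
  | inr x => d x
  end.
Definition Hcol (Q : quiver) (e d : 'I_(nv Q) -> nat) (i : Hidx Q) : nat :=
  match i with
  | inl (inl a) => e (qs a)
  | inl (inr a) => d (qs a)
  | inr x => e x
  end.

Definition Hvar (K : nzRingType) (Q : quiver) (I : (qpath Q -> K) -> Prop)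
  (e d : 'I_(nv Q) -> nat) : (coords (Hrow e d) (Hcol e d) -> K) -> Prop :=
  fun z =>
    let V : repmx K e := fun a => mxat z (inl (inl a)) in
    let W : repmx K d := fun a => mxat z (inl (inr a)) in
    let f : forall x : 'I_(nv Q), 'M[K]_(d x, e x) := fun x => mxat z (inr x) in
    [/\ isrep I V, isrep I W &
        forall a : 'I_(na Q), W a *m f (qs a) = f (qt a) *m V a].

Definition hom_irreducible (K : nzRingType) (Q : quiver) (I : (qpath Q -> K) -> Prop)
  : Prop :=
  forall e d : 'I_(nv Q) -> nat, zirreducible (@Hvar K Q I e d).

(* coordinate blocks: U_a (e), V_a (d), Z_a (d_{ta} x e_{sa}) *)
Definition Eidx (Q : quiver) := ('I_(na Q) + 'I_(na Q) + 'I_(na Q))%type.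
Definition Erow (Q : quiver) (e d : 'I_(nv Q) -> nat) (i : Eidx Q) : nat :=
  match i with
  | inl (inl a) => e (qt a)
  | inl (inr a) => d (qt a)
  | inr a => d (qt a)
  end.
Definition Ecol (Q : quiver) (e d : 'I_(nv Q) -> nat) (i : Eidx Q) : nat :=
  match i with
  | inl (inl a) => e (qs a)
  | inl (inr a) => d (qs a)
  | inr a => e (qs a)
  end.

Definition Wext (K : nzRingType) (Q : quiver) (e d : 'I_(nv Q) -> nat)
  (V : repmx K d) (Z : forall a : 'I_(na Q), 'M[K]_(d (qt a), e (qs a)))
  (U : repmx K e) : repmx K (fun x => d x + e x) :=
  fun a => block_mx (V a) (Z a) 0 (U a).

Definition Evar (K : nzRingType) (Q : quiver) (I : (qpath Q -> K) -> Prop)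
  (e d : 'I_(nv Q) -> nat) : (coords (Erow e d) (Ecol e d) -> K) -> Prop :=
  fun z =>
    let U : repmx K e := fun a => mxat z (inl (inl a)) in
    let V : repmx K d := fun a => mxat z (inl (inr a)) in
    let Z : forall a : 'I_(na Q), 'M[K]_(d (qt a), e (qs a)) :=
      fun a => mxat z (inr a) in
    [/\ isrep I U, isrep I V & isrep I (Wext V Z U)].

Definition ext_irreducible (K : nzRingType) (Q : quiver) (I : (qpath Q -> K) -> Prop)
  : Prop :=
  forall e d : 'I_(nv Q) -> nat, zirreducible (@Evar K Q I e d).

From HB Require Import structures.
From mathcomp Require Import all_boot all_order all_algebra ring.
From Stdlib Require Import FunctionalExtensionality.
Set Implicit Arguments. Unset Strict Implicit. Unset Printing Implicit Defensive.
Import GRing.Theory.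
Local Open Scope ring_scope.

(* A point of H(d + e, e) is a homomorphism f from a representation W of
   dimension d + e to a representation U of dimension e.  Completing each f_x
   by [1 0] gives a square matrix B_x; where all B_x are invertible, f is
   surjective and conjugating W by B makes it block upper triangular,
   [[V, Z], [0, U]], i.e. a point (U, V, Z) of E(e, d).  This map is a ratio of
   polynomials with denominator a power of prod_x det B_x, and it has the
   section (U, V, Z) |-> (W^{V,Z,U}, U, [0 1]) landing where det B = 1.  So
   E(e, d) is a retract of a principal open subset of the irreducible variety
   H(d + e, e), and irreducibility passes to it. *)

Section PolynomialFunctions.
Variables (K : comNzRingType) (J : Type).
Implicit Types f g : (J -> K) -> K.

Lemma polyfun_ext f g : polyfun f -> f =1 g -> polyfun g.
Proof. by move=> Hf /functional_extensionality <-. Qed.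

Lemma polyfun_sum (T : Type) (r : seq T) (P : pred T) (F : T -> (J -> K) -> K) :
  (forall i, P i -> polyfun (F i)) -> polyfun (fun z => \sum_(i <- r | P i) F i z).
Proof.
move=> HF; elim: r => [|i r IH].
  by apply: (polyfun_ext (pf_const _ 0)) => z; rewrite big_nil.
case Pi: (P i); last by apply: (polyfun_ext IH) => z; rewrite big_cons Pi.
by apply: (polyfun_ext (pf_add (HF i Pi) IH)) => z; rewrite big_cons Pi.
Qed.

Lemma polyfun_prod (T : Type) (r : seq T) (P : pred T) (F : T -> (J -> K) -> K) :
  (forall i, P i -> polyfun (F i)) -> polyfun (fun z => \prod_(i <- r | P i) F i z).
Proof.
move=> HF; elim: r => [|i r IH].
  by apply: (polyfun_ext (pf_const _ 1)) => z; rewrite big_nil.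
case Pi: (P i); last by apply: (polyfun_ext IH) => z; rewrite big_cons Pi.
by apply: (polyfun_ext (pf_mul (HF i Pi) IH)) => z; rewrite big_cons Pi.
Qed.

Lemma polyfun_exp f n : polyfun f -> polyfun (fun z => f z ^+ n).
Proof.
move=> Hf; elim: n => [|n IH].
  by apply: (polyfun_ext (pf_const _ 1)) => z; rewrite expr0.
by apply: (polyfun_ext (pf_mul Hf IH)) => z; rewrite exprS.
Qed.

Definition polymx m n (M : (J -> K) -> 'M[K]_(m, n)) := forall i j, polyfun (fun z => M z i j).

Lemma polymx_const m n (A : 'M[K]_(m, n)) : polymx (fun _ => A).
Proof. by move=> i j; apply: pf_const. Qed.

Lemma polymx_mul m n p (M : (J -> K) -> 'M[K]_(m, n)) (N : (J -> K) -> 'M[K]_(n, p)) :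
  polymx M -> polymx N -> polymx (fun z => M z *m N z).
Proof.
move=> HM HN i j; apply: (polyfun_ext (polyfun_sum (index_enum 'I_n) (P := xpredT)
  (fun k _ => pf_mul (HM i k) (HN k j)))) => z.
by rewrite mxE.
Qed.

Lemma polymx_col m1 m2 n (A : (J -> K) -> 'M[K]_(m1, n)) (B : (J -> K) -> 'M[K]_(m2, n)) :
  polymx A -> polymx B -> polymx (fun z => col_mx (A z) (B z)).
Proof.
move=> HA HB i j; case: (split_ordP i) => k ->.
  by apply: (polyfun_ext (HA k j)) => z; rewrite col_mxEu.
by apply: (polyfun_ext (HB k j)) => z; rewrite col_mxEd.
Qed.

Lemma polyfun_det n (A : (J -> K) -> 'M[K]_n) : polymx A -> polyfun (fun z => \det (A z)).
Proof.
move=> HA; apply: (polyfun_sum (index_enum _) (P := xpredT)) => s _.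
apply: pf_mul; first exact: pf_const.
exact: (polyfun_prod (index_enum _) (P := xpredT)).
Qed.

Lemma polymx_adj n (A : (J -> K) -> 'M[K]_n) : polymx A -> polymx (fun z => \adj (A z)).
Proof.
move=> HA i j; apply: (polyfun_ext (pf_mul (pf_const _ ((-1) ^+ (j + i)))
  (polyfun_det (A := fun z => row' j (col' i (A z))) _))) => [k l|z].
  by apply: (polyfun_ext (HA _ _)) => z; rewrite !mxE.
by rewrite mxE.
Qed.

End PolynomialFunctions.

Lemma polymx_mxat (K : comNzRingType) (I : Type) (r c : I -> nat) (i : I) :
  polymx (fun z : coords r c -> K => mxat z i).
Proof. by move=> k l; apply: (polyfun_ext (pf_var _ (existT _ i (k, l)))) => z; rewrite mxE. Qed.

Arguments polymx_mxat {K I r c} i.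

Section Localization.
Variables (K : idomainType) (J L : Type) (D : (J -> K) -> K).
Hypothesis polyD : polyfun D.

(* regular functions on the principal open set [D != 0]: there they agree with
   a polynomial divided by a power of [D] *)
Definition locfun (f : (J -> K) -> K) :=
  exists N P, polyfun P /\ forall z, D z != 0 -> P z = D z ^+ N * f z.

Lemma locfun_ext f g : locfun f -> f =1 g -> locfun g.
Proof. by move=> [N [P [HP EP]]] fg; exists N, P; split=> // z Dz; rewrite -fg EP. Qed.

Lemma locfun_polyfun f : polyfun f -> locfun f.
Proof. by move=> Hf; exists 0%N, f; split=> // z _; rewrite expr0 mul1r. Qed.

Lemma locfunD f g : locfun f -> locfun g -> locfun (fun z => f z + g z).
Proof.
move=> [N1 [P1 [HP1 E1]]] [N2 [P2 [HP2 E2]]].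
exists (N1 + N2)%N, (fun z => D z ^+ N2 * P1 z + D z ^+ N1 * P2 z); split.
  by apply: pf_add; apply: pf_mul => //; apply: polyfun_exp.
by move=> z Dz; rewrite E1 // E2 // exprD; ring.
Qed.

Lemma locfunM f g : locfun f -> locfun g -> locfun (fun z => f z * g z).
Proof.
move=> [N1 [P1 [HP1 E1]]] [N2 [P2 [HP2 E2]]].
exists (N1 + N2)%N, (fun z => P1 z * P2 z); split; first exact: pf_mul.
by move=> z Dz; rewrite E1 // E2 // exprD; ring.
Qed.

Variable phi : (J -> K) -> L -> K.
Hypothesis locphi : forall l, locfun (fun z => phi z l).

Lemma locfun_comp g : polyfun g -> locfun (fun z => g (phi z)).
Proof.
elim=> [c|l|f1 f2 _ IH1 _ IH2|f1 f2 _ IH1 _ IH2].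
- exact/locfun_polyfun/pf_const.
- exact: locphi.
- exact: locfunD.
- exact: locfunM.
Qed.

Lemma zclosed_preimage (C : (L -> K) -> Prop) :
  zclosed C -> zclosed (fun z => D z = 0 \/ C (phi z)).
Proof.
move=> [S [polyS HC]].
pose S' h := exists g N P, [/\ S g, polyfun P,
  forall z, D z != 0 -> P z = D z ^+ N * g (phi z) & h = fun z => D z * P z].
exists S'; split=> [h [g [N [P [_ HP _ ->]]]]|z]; first exact: pf_mul.
split=> [Cz h [g [N [P [Sg _ EP ->]]]]|Hz].
  have [D0|Dz] := eqVneq (D z) 0; first by rewrite D0 mul0r.
  case: Cz => [/eqP|Cz]; first by rewrite (negbTE Dz).
  by rewrite EP // (proj1 (HC _) Cz g Sg) !mulr0.
have [D0|Dz] := eqVneq (D z) 0; [by left | right].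
apply/HC => g Sg; have [N [P [HP EP]]] := locfun_comp (polyS g Sg).
have /eqP := Hz _ (ex_intro _ g (ex_intro _ N (ex_intro _ P (And4 Sg HP EP erefl)))).
by rewrite EP // mulrA -exprS mulf_eq0 expf_eq0 (negbTE Dz) andbF => /eqP.
Qed.

End Localization.

Lemma zirreducible_retract (K : idomainType) (J L : Type)
    (X : (J -> K) -> Prop) (Y : (L -> K) -> Prop) (D : (J -> K) -> K)
    (phi : (J -> K) -> L -> K) (sigma : (L -> K) -> J -> K) :
  polyfun D -> (forall l, locfun D (fun z => phi z l)) ->
  (forall x, X x -> D x != 0 -> Y (phi x)) ->
  (forall y, Y y -> X (sigma y)) -> (forall y, Y y -> D (sigma y) != 0) ->
  (forall y, Y y -> phi (sigma y) = y) ->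
  (exists y, Y y) -> zirreducible X -> zirreducible Y.
Proof.
move=> polyD locphi XY YX Dsigma phiK Yne [_ irrX]; split=> // C1 C2 cl1 cl2 YC.
have XC x : X x -> (D x = 0 \/ C1 (phi x)) \/ (D x = 0 \/ C2 (phi x)).
  move=> Xx; have [D0|Dx] := eqVneq (D x) 0; first by left; left.
  by case: (YC _ (XY x Xx Dx)); [left | right]; right.
have pull (C : (L -> K) -> Prop) y : Y y -> D (sigma y) = 0 \/ C (phi (sigma y)) -> C y.
  by move=> Yy [/eqP|]; [rewrite (negbTE (Dsigma y Yy)) | rewrite phiK].
case: (irrX _ _ (zclosed_preimage polyD locphi cl1) (zclosed_preimage polyD locphi cl2) XC).
  by move=> H; left=> y Yy; apply: pull (H _ (YX y Yy)).
by move=> H; right=> y Yy; apply: pull (H _ (YX y Yy)).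
Qed.

Section Representations.
Variables (K : nzRingType) (Q : quiver) (I : (qpath Q -> K) -> Prop).

Lemma isrep_zero (d : 'I_(nv Q) -> nat) (V : repmx K d) :
  (forall f p, I f -> f p != 0 -> (0 < size p.2)%N) -> (forall a, V a = 0) -> isrep I V.
Proof.
move=> relI V0 f If s _ _ x y; rewrite /evalblk big1 // => p _.
have [->|fp] := eqVneq (f p) 0; first by rewrite scale0r.
case: p fp (relI f p If fp) => p0 [|b t] //= _ _.
by rewrite V0 mul0mx if_same mulmx0 scaler0.
Qed.

Section UpperTriangular.
Variables (d e : 'I_(nv Q) -> nat) (W : repmx K (fun x => d x + e x)).
Hypothesis W_triu :
  forall a, dlsubmx (W a : 'M_(d (qt a) + e (qt a), d (qs a) + e (qs a))) = 0.

Let Wul : repmx K d :=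
  fun a => ulsubmx (W a : 'M_(d (qt a) + e (qt a), d (qs a) + e (qs a))).

Lemma pathmx_triu s x y :
  ulsubmx (pathmx W x s y : 'M_(d y + e y, d x + e x)) = pathmx Wul x s y
  /\ dlsubmx (pathmx W x s y : 'M_(d y + e y, d x + e x)) = 0.
Proof.
elim: s x => [|a s IH] x /=.
  have [<-|nxy] := eqVneq x y; last by split; apply/matrixP => i j; rewrite !mxE.
  by rewrite !pid_mx_1 scalar_mx_block block_mxKul block_mxKdl.
have [IHul IHdl] := IH (qt a).
have [<-|nx] := eqVneq (qs a) x; last by rewrite !mulmx0; split; apply/matrixP => i j; rewrite !mxE.
rewrite !pid_mx_1 !mulmx1.
set M := (pathmx W (qt a) s y : 'M_(d y + e y, d (qt a) + e (qt a))).
rewrite -[M]submxK -[W a : 'M_(_ + _, d (qs a) + e (qs a))]submxK mulmx_block.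
by rewrite block_mxKul block_mxKdl -/M IHul IHdl W_triu !mulmx0 addr0 mul0mx add0r.
Qed.

Lemma isrep_ulsubmx : isrep I W -> isrep I Wul.
Proof.
move=> HW f If s us Hs x y; apply/matrixP => i j.
have /matrixP/(_ (lshift _ i) (lshift _ j)) := HW f If s us Hs x y.
rewrite /evalblk !summxE !mxE => W0; rewrite -[RHS]W0; apply: eq_bigr => p _.
by rewrite -(proj1 (pathmx_triu p.2 x y)) !mxE.
Qed.

End UpperTriangular.
End Representations.

Section Conjugation.
Variables (K : comUnitRingType) (Q : quiver) (I : (qpath Q -> K) -> Prop).
Variables (d : 'I_(nv Q) -> nat) (V : repmx K d) (P : forall x, 'M[K]_(d x)).
Hypothesis P_unit : forall x, P x \in unitmx.

Let VP : repmx K d := fun a => P (qt a) *m V a *m invmx (P (qs a)).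

Lemma pathmx_conj s x y : pathmx VP x s y = P y *m pathmx V x s y *m invmx (P x).
Proof.
elim: s x => [|a s IH] x /=.
  have [<-|nxy] := eqVneq x y; last by rewrite mulmx0 mul0mx.
  by rewrite pid_mx_1 mulmx1 mulmxV.
rewrite IH; have [<-|nx] := eqVneq (qs a) x; last by rewrite !mulmx0 mul0mx.
by rewrite !pid_mx_1 !mulmx1 !mulmxA -[_ *m invmx _ *m P _]mulmxA mulVmx // mulmx1.
Qed.

Lemma isrep_conj : isrep I V -> isrep I VP.
Proof.
move=> HV f If s us Hs x y; have := HV f If s us Hs x y.
rewrite /evalblk => V0; under eq_bigr do rewrite pathmx_conj scalemxAl scalemxAr.
by rewrite -mulmx_suml -mulmx_sumr V0 mulmx0 mul0mx.
Qed.

End Conjugation.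

Definition mxpoint (K : nzRingType) (I : Type) (r c : I -> nat)
    (M : forall i, 'M[K]_(r i, c i)) : coords r c -> K :=
  fun '(existT i (k, l)) => M i k l.

Lemma mxat_mxpoint (K : nzRingType) (I : Type) (r c : I -> nat)
    (M : forall i, 'M[K]_(r i, c i)) : mxat (mxpoint M) = M.
Proof. by apply: functional_extensionality_dep => i; apply/matrixP => k l; rewrite mxE. Qed.

Lemma locfun_mulmx_invmx (K : fieldType) (J : Type) m n
    (A : (J -> K) -> 'M[K]_(m, n)) (B : (J -> K) -> 'M[K]_n) (R : (J -> K) -> K) i j :
  polymx A -> polymx B -> polyfun R ->
  locfun (fun z => \det (B z) * R z) (fun z => (A z *m invmx (B z)) i j).
Proof.
move=> HA HB HR; exists 1%N, (fun z => R z * (A z *m \adj (B z)) i j); split.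
  exact/pf_mul/polymx_mul/polymx_adj.
move=> z; rewrite mulf_eq0 negb_or => /andP[detB _].
rewrite /invmx unitmxE unitfE detB -scalemxAr [in RHS]mxE expr1; by field.
Qed.

Section HomToExt.
Variables (K : fieldType) (Q : quiver) (I : (qpath Q -> K) -> Prop) (d e : 'I_(nv Q) -> nat).

Notation de := (fun x => d x + e x).
Notation HC := (coords (Hrow de e) (Hcol de e)).
Notation EC := (coords (Erow e d) (Ecol e d)).

Definition basismx (z : HC -> K) x : 'M[K]_(d x + e x) :=
  col_mx (row_mx 1%:M 0) (mxat z (inr x)).

Definition hdet (z : HC -> K) := \prod_x \det (basismx z x).

Definition conjW (z : HC -> K) a : 'M[K]_(d (qt a) + e (qt a), d (qs a) + e (qs a)) :=
  basismx z (qt a) *m mxat z (inl (inl a)) *m invmx (basismx z (qs a)).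

Definition ext_of_hom (z : HC -> K) : EC -> K :=
  mxpoint (fun i => match i return 'M[K]_(Erow e d i, Ecol e d i) with
    | inl (inl a) => mxat z (inl (inr a))
    | inl (inr a) => ulsubmx (conjW z a)
    | inr a => ursubmx (conjW z a)
    end).

Definition hom_of_ext (z : EC -> K) : HC -> K :=
  mxpoint (fun i => match i return 'M[K]_(Hrow de e i, Hcol de e i) with
    | inl (inl a) => Wext (fun a => mxat z (inl (inr a))) (fun a => mxat z (inr a))
                          (fun a => mxat z (inl (inl a))) a
    | inl (inr a) => mxat z (inl (inl a))
    | inr x => row_mx 0 1%:M
    end).

Lemma basismx_hom_of_ext z x : basismx (hom_of_ext z) x = 1%:M.
Proof. by rewrite /basismx mxat_mxpoint /= [RHS](scalar_mx_block (d x) (e x)). Qed.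

Lemma hdet_hom_of_ext z : hdet (hom_of_ext z) = 1.
Proof. by rewrite /hdet big1 // => x _; rewrite basismx_hom_of_ext det1. Qed.

Lemma hom_of_extK z : ext_of_hom (hom_of_ext z) = z.
Proof.
apply: functional_extensionality => -[[[a|a]|a] [k l]] /=; rewrite /conjW ?mxat_mxpoint /=.
- by rewrite mxE.
- by rewrite !basismx_hom_of_ext invmx1 mul1mx mulmx1 /Wext block_mxKul mxE.
- by rewrite !basismx_hom_of_ext invmx1 mul1mx mulmx1 /Wext block_mxKur mxE.
Qed.

Lemma polymx_basismx x : polymx (fun z => basismx z x).
Proof. exact/polymx_col/(polymx_mxat (inr x))/polymx_const. Qed.

Lemma polyfun_hdet : polyfun hdet.
Proof.
apply: (polyfun_prod (index_enum _) (P := xpredT)) => x _.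
exact/polyfun_det/polymx_basismx.
Qed.

Lemma locfun_conjW a k l : locfun hdet (fun z => conjW z a k l).
Proof.
pose R z := \prod_(x | x != qs a) \det (basismx z x).
have -> : hdet = fun z => \det (basismx z (qs a)) * R z.
  by apply: functional_extensionality => z; rewrite /hdet (bigD1 (qs a)).
apply: locfun_mulmx_invmx.
- by apply: polymx_mul; [apply: polymx_basismx | exact: (polymx_mxat (inl (inl a)))].
- exact: polymx_basismx.
- by apply: (polyfun_prod (index_enum _)) => x _; apply/polyfun_det/polymx_basismx.
Qed.

Lemma locfun_ext_of_hom c : locfun hdet (fun z => ext_of_hom z c).
Proof.
case: c => -[[a|a]|a] [k l] /=.
- exact/locfun_polyfun/(polymx_mxat (inl (inr a))).
- by apply: locfun_ext (locfun_conjW (a := a) (lshift _ k) (lshift _ l)) _ => z; rewrite !mxE.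
- by apply: locfun_ext (locfun_conjW (a := a) (lshift _ k) (rshift _ l)) _ => z; rewrite !mxE.
Qed.

Lemma hom_mul_invbasis z x : basismx z x \in unitmx ->
  mxat z (inr x) *m invmx (basismx z x) = row_mx 0 1%:M.
Proof.
move=> /mulmxV; rewrite /basismx mul_col_mx [RHS](scalar_mx_block (d x) (e x)).
by case/eq_col_mx.
Qed.

Lemma dsubmx_conjW z a : basismx z (qs a) \in unitmx ->
  mxat z (inl (inr a)) *m mxat z (inr (qs a)) = mxat z (inr (qt a)) *m mxat z (inl (inl a)) ->
  dsubmx (conjW z a) = row_mx 0 (mxat z (inl (inr a))).
Proof.
move=> unit_qs hom_a.
rewrite /conjW /basismx !mul_col_mx col_mxKd -hom_a -mulmxA.
by rewrite -/(basismx z (qs a)) hom_mul_invbasis // mul_mx_row mulmx0 mulmx1.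
Qed.

Lemma Hvar_Evar z : @Hvar _ _ I de e z -> hdet z != 0 -> @Evar _ _ I e d (ext_of_hom z).
Proof.
move=> [HW HU hom] /prodf_neq0 detB.
have unitB x : basismx z x \in unitmx by rewrite unitmxE unitfE detB.
have triu a := dsubmx_conjW (unitB (qs a)) (hom a).
have HconjW : isrep (d := de) I (conjW z) by apply: isrep_conj.
rewrite /Evar /Wext mxat_mxpoint /=; split=> //.
  by apply: isrep_ulsubmx => // a; rewrite /dlsubmx triu row_mxKl.
suff -> : (fun a => block_mx (ulsubmx (conjW z a)) (ursubmx (conjW z a)) 0
                            (mxat z (inl (inr a)))) = conjW z by [].
apply: functional_extensionality_dep => a.
by rewrite -[RHS]submxK /dlsubmx /drsubmx triu row_mxKl row_mxKr.
Qed.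

Lemma Evar_Hvar z : @Evar _ _ I e d z -> @Hvar _ _ I de e (hom_of_ext z).
Proof.
move=> [HU HV HW]; rewrite /Hvar mxat_mxpoint /=; split=> // a.
rewrite /Wext mul_mx_row mulmx0 mulmx1 mul_row_block.
by rewrite !mul0mx !mul1mx !add0r.
Qed.

End HomToExt.

Theorem corollary3p3 (K : closedFieldType) (Q : quiver)
  (I : (qpath Q -> K) -> Prop) :
  kQideal I -> admissible I ->
  hom_irreducible I -> ext_irreducible I.
Proof.
move=> _ [rel_long _] hirr e d.
have rel_nontriv f p : I f -> f p != 0 -> (0 < size p.2)%N.
  by move=> If fp; apply: leq_trans (rel_long f p If fp).
apply: (zirreducible_retract (D := hdet (d := d) (e := e)) (phi := ext_of_hom (d := d) (e := e))
          (sigma := hom_of_ext (d := d) (e := e))).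
- exact: polyfun_hdet.
- exact: locfun_ext_of_hom.
- exact: Hvar_Evar.
- exact: Evar_Hvar.
- by move=> z _; rewrite hdet_hom_of_ext oner_neq0.
- by move=> z _; rewrite hom_of_extK.
- exists (mxpoint (fun _ => 0)); rewrite /Evar mxat_mxpoint.
  by split; apply: isrep_zero => // a; rewrite /Wext /= block_mx0.
- exact: hirr.
Qed.
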